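(* Work in the ring $\mathcal O_{\mathbb{Q}(\sqrt{-3})}=\mathbb{Z}[\frac{1+\sqrt{-3}}{2}]$. If $a$ and $b$ are relatively prime positive integers and $3$ divides $a$ in $\mathbb{Z}$, then there is no nonzero $z\in\mathcal O_{\mathbb{Q}(\sqrt{-3})}$ with $I_2^*(z)=a/b$.
   Context: $\mathcal O_{\mathbb{Q}(\sqrt{-3})}$ is a unique factorization domain. $|z|=\sqrt{z\bar z}$, $\arg(z)\in[0,2\pi)$. Let $A$ be the set of nonzero $z\in\mathcal O_{\mathbb{Q}(\sqrt{-3})}$ with $0\le \arg(z)<\pi/3$. Two elements are relatively prime if they have no nonunit common divisor. For nonzero $x,z$, write $x\Diamond z$ iff $x\in A$, $x\mid z$, and $x$ is relatively prime to $z/x$. For $m\in\mathbb{Z}$ define $\delta_m^*(z)=\sum_{x\Diamond z}|x|^m$ and $I_m^*(z)=\delta_m^*(z)/|z|^m$. *)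

From mathcomp Require Import all_boot all_order all_algebra.
Set Implicit Arguments. Unset Strict Implicit. Unset Printing Implicit Defensive.
Import Order.TTheory GRing.Theory Num.Theory.
Local Open Scope ring_scope.

(* Eisenstein integers O_{Q(sqrt -3)} = Z[w], w = (1 + sqrt(-3))/2, w^2 = w - 1.
   The pair (p, q) : int * int represents p + q w. *)
Definition eis := (int * int)%type.

Definition ezero : eis := (0, 0).
Definition eone : eis := (1, 0).

(* (p + q w)(r + s w) = (pr - qs) + (ps + qr + qs) w *)
Definition emul (x y : eis) : eis :=
  (x.1 * y.1 - x.2 * y.2, x.1 * y.2 + x.2 * y.1 + x.2 * y.2).

(* |p + q w|^2 = (p + q/2)^2 + 3 q^2 / 4 = p^2 + p q + q^2 *)
Definition enorm (x : eis) : int := x.1 ^+ 2 + x.1 * x.2 + x.2 ^+ 2.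

Definition edvd (x z : eis) : Prop := exists w, z = emul x w.

Definition eunit (u : eis) : Prop := exists v, emul u v = eone.

Definition erelprime (x y : eis) : Prop :=
  forall d, edvd d x -> edvd d y -> eunit d.

(* A : nonzero z with 0 <= arg z < pi/3.  For z = p + q w we have
   Re z = p + q/2, Im z = q sqrt(3)/2; so Im z >= 0 <-> q >= 0, and
   (given Im z >= 0, z <> 0) arg z < pi/3 <-> Im z < sqrt 3 * Re z <-> p > 0. *)
Definition inA (x : eis) : Prop := 0 < x.1 /\ 0 <= x.2.

Definition diamond (x z : eis) : Prop :=
  inA x /\ exists w, z = emul x w /\ erelprime x w.

(* delta2_is z d  <->  d = delta_2^*(z) = sum_{x <> z} |x|^2
   (the set {x | x <> z} is finite for z <> 0; s enumerates it without repetition) *)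
Definition delta2_is (z : eis) (d : rat) : Prop :=
  exists s : seq eis, uniq s /\ (forall x, x \in s <-> diamond x z) /\
    d = \sum_(x <- s) (enorm x)%:~R.

Definition I2_is (z : eis) (r : rat) : Prop :=
  exists d, delta2_is z d /\ r = d / (enorm z)%:~R.

(* The unitary-divisor sum is multiplicative: if p is prime, p does not divide
   w and e > 0, a unitary divisor of p^e w is either prime to p, and then a
   unitary divisor of w, or the associate in A of p^e times a unitary divisor
   of w; hence delta_2^*(p^e w) = (1 + N(p)^e) delta_2^*(w).  A norm
   N(s + t omega) = (s - t)^2 + 3 s t is 0 or 1 mod 3, so no factor 1 + N(p)^e,
   and thus no delta_2^*(z), is divisible by 3.  But a |z|^2 = b delta_2^*(z)
   with 3 | a and gcd(a, b) = 1 would force 3 | delta_2^*(z). *)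
From mathcomp Require Import all_boot all_order all_algebra.
From mathcomp Require Import zify ring.
From Stdlib Require Import Classical.
Import Order.TTheory GRing.Theory Num.Theory.
Set Implicit Arguments. Unset Strict Implicit. Unset Printing Implicit Defensive.
Local Open Scope ring_scope.

Definition eadd (x y : eis) : eis := (x.1 + y.1, x.2 + y.2).
Definition eopp (x : eis) : eis := (- x.1, - x.2).
Definition econj (x : eis) : eis := (x.1 + x.2, - x.2).

Ltac eis_ring :=
  rewrite /emul /eadd /eopp /econj /enorm /ezero /eone /=; try congr pair; ring.

Lemma emulC x y : emul x y = emul y x.
Proof. by case: x y => [? ?] [? ?]; eis_ring. Qed.

Lemma emulA x y z : emul x (emul y z) = emul (emul x y) z.
Proof. by case: x y z => [? ?] [? ?] [? ?]; eis_ring. Qed.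

Lemma emul1 x : emul eone x = x.
Proof. by case: x => [? ?]; eis_ring. Qed.

Lemma emul0 x : emul x ezero = ezero.
Proof. by case: x => [? ?]; eis_ring. Qed.

Lemma emulDr x y z : emul x (eadd y z) = eadd (emul x y) (emul x z).
Proof. by case: x y z => [? ?] [? ?] [? ?]; eis_ring. Qed.

Lemma emul_conj x : emul x (econj x) = (enorm x, 0).
Proof. by case: x => [? ?]; eis_ring. Qed.

Lemma enormM x y : enorm (emul x y) = enorm x * enorm y.
Proof. by case: x y => [? ?] [? ?]; eis_ring. Qed.

Lemma enorm_conj x : enorm (econj x) = enorm x.
Proof. by case: x => [? ?]; eis_ring. Qed.

Lemma enorm0 : enorm ezero = 0.
Proof. by eis_ring. Qed.

Lemma enorm1 : enorm eone = 1.
Proof. by eis_ring. Qed.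

Lemma enorm_ge0 x : 0 <= enorm x.
Proof. by case: x => [a b]; rewrite /enorm /=; nia. Qed.

Lemma enorm_eq0 x : enorm x = 0 -> x = ezero.
Proof.
case: x => [a b]; rewrite /enorm /= => N0.
by have [-> ->] : a = 0 /\ b = 0 by nia.
Qed.

Lemma enorm_gt0 x : x <> ezero -> 0 < enorm x.
Proof. by move=> xn0; rewrite lt_def enorm_ge0 andbT; apply/eqP => /enorm_eq0. Qed.

Lemma emul_eq0 x y : emul x y = ezero -> x = ezero \/ y = ezero.
Proof.
move=> /(congr1 enorm)/eqP; rewrite enormM enorm0.
by rewrite mulf_eq0 => /orP[] /eqP/enorm_eq0; [left | right].
Qed.

Lemma emulI d x y : d <> ezero -> emul d x = emul d y -> x = y.
Proof.
move=> dn0 E; have : emul d (eadd x (eopp y)) = ezero.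
  by rewrite emulDr E; case: d y {E dn0} => [? ?] [? ?]; eis_ring.
case/emul_eq0 => // -[]; case: x y {E} => [? ?] [? ?] /= E1 E2.
by congr pair; lia.
Qed.

Lemma eunit_norm u : eunit u <-> enorm u = 1.
Proof.
split=> [[v /(congr1 enorm)]|N1]; last by exists (econj u); rewrite emul_conj N1.
rewrite enormM enorm1 => N1.
have : enorm v <> 0 by move=> E; move: N1; rewrite E mulr0.
have := enorm_ge0 u; have := enorm_ge0 v; nia.
Qed.

Lemma eunit_mul u v : eunit u -> eunit v -> eunit (emul u v).
Proof. by move=> /eunit_norm Nu /eunit_norm Nv; apply/eunit_norm; rewrite enormM Nu Nv mulr1. Qed.

Lemma edvd_refl x : edvd x x.
Proof. by exists eone; rewrite emulC emul1. Qed.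

Lemma edvd_trans y x z : edvd x y -> edvd y z -> edvd x z.
Proof. by move=> [a ->] [b ->]; exists (emul a b); rewrite emulA. Qed.

Lemma edvd_mulIl x y : edvd x (emul x y).
Proof. by exists y. Qed.

Lemma edvd_mulIr x y : edvd y (emul x y).
Proof. by exists x; rewrite emulC. Qed.

Lemma edvd_mulr d x y : edvd d x -> edvd d (emul x y).
Proof. by move/edvd_trans; apply; apply: edvd_mulIl. Qed.

Lemma edvd_mull d x y : edvd d y -> edvd d (emul x y).
Proof. by move/edvd_trans; apply; apply: edvd_mulIr. Qed.

Lemma edvd_add d x y : edvd d x -> edvd d y -> edvd d (eadd x y).
Proof. by move=> [a ->] [b ->]; exists (eadd a b); rewrite emulDr. Qed.

Lemma eunit_dvd u x : eunit u -> edvd u x.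
Proof. by move=> [v uv]; exists (emul v x); rewrite emulA uv emul1. Qed.

Lemma edvd_unit d u : edvd d u -> eunit u -> eunit d.
Proof. by move=> [a ->] [v E]; exists (emul a v); rewrite emulA. Qed.

Lemma enorm_lt_mul x y : x <> ezero -> y <> ezero -> ~ eunit y ->
  enorm x < enorm (emul x y).
Proof.
move=> xn0 yn0 yu; rewrite enormM.
have := enorm_gt0 xn0; have := enorm_gt0 yn0.
have : enorm y <> 1 by move/eunit_norm.
nia.
Qed.

Lemma enorm_proper_dvd x y : y <> ezero -> edvd x y -> ~ edvd y x ->
  enorm x < enorm y.
Proof.
move=> yn0 [c Ey] yNx; rewrite Ey; apply: enorm_lt_mul.
- by move=> x0; apply: yn0; rewrite Ey x0 emulC emul0.
- by move=> c0; apply: yn0; rewrite Ey c0 emul0.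
- by move=> [v cv]; apply: yNx; exists v; rewrite Ey -emulA cv emulC emul1.
Qed.

Lemma enorm_ind (P : eis -> Prop) :
  (forall z, (forall y, enorm y < enorm z -> P y) -> P z) -> forall z, P z.
Proof.
move=> IH z; move: {2}(absz (enorm z)) (erefl (absz (enorm z))) => n.
elim/ltn_ind: n z => n IHn z Ez; apply: IH => y lt_yz.
by apply: (IHn (absz (enorm y))) => //; rewrite -Ez; have := enorm_ge0 y; lia.
Qed.

Definition edivq (d x : eis) : eis :=
  let m := emul x (econj d) in ((m.1 %/ enorm d)%Z, (m.2 %/ enorm d)%Z).

Lemma edivqK d q : d <> ezero -> edivq d (emul d q) = q.
Proof.
move=> /enorm_gt0; rewrite lt0r /edivq => /andP[Nd _].
have -> : emul (emul d q) (econj d) = (q.1 * enorm d, q.2 * enorm d).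
  by case: d q {Nd} => [? ?] [? ?]; eis_ring.
by rewrite /= !mulzK //; case: q.
Qed.

Definition edvdb (d x : eis) : bool := emul d (edivq d x) == x.

Lemma edvdP d x : reflect (edvd d x) (edvdb d x).
Proof.
apply: (iffP eqP) => [<-|[q ->]]; first exact: edvd_mulIl.
case: (d =P ezero) => [->|dn0]; last by rewrite edivqK.
by rewrite ![emul ezero _]emulC !emul0.
Qed.

Lemma nearest_quotient (A n : int) : 0 < n -> exists q, - n <= 2 * (A - q * n) <= n.
Proof.
move=> n_gt0; have n2_gt0 : 0 < 2 * n by lia.
exists ((2 * A + n) %/ (2 * n))%Z.
have := divz_eq (2 * A + n) (2 * n).
have := modz_ge0 (2 * A + n) (lt0r_neq0 n2_gt0).
have := ltz_pmod (2 * A + n) n2_gt0.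
nia.
Qed.

Lemma euclid_div x y : y <> ezero ->
  exists q r, x = eadd (emul q y) r /\ enorm r < enorm y.
Proof.
move=> /enorm_gt0; set n := enorm y => n_gt0.
have [q1 Hq1] := nearest_quotient (emul x (econj y)).1 n_gt0.
have [q2 Hq2] := nearest_quotient (emul x (econj y)).2 n_gt0.
exists (q1, q2), (eadd x (eopp (emul (q1, q2) y))); split.
  by case: x y {n n_gt0 Hq1 Hq2} => [? ?] [? ?]; eis_ring.
set r := eadd x _; have := enormM r (econj y); rewrite enorm_conj -/n.
have -> : emul r (econj y) = eadd (emul x (econj y)) (eopp (q1 * n, q2 * n)).
  by rewrite /r /n; case: x y {n n_gt0 Hq1 Hq2 r} => [? ?] [? ?]; eis_ring.
move: Hq1 Hq2; case: (emul x (econj y)) => A B /= Hq1 Hq2.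
rewrite [enorm (eadd _ _)]/enorm /= => Nr; have := enorm_ge0 r; nia.
Qed.

Lemma bezout x y : exists a b,
  edvd (eadd (emul a x) (emul b y)) x /\ edvd (eadd (emul a x) (emul b y)) y.
Proof.
elim/enorm_ind: y x => y IH x.
case: (y =P ezero) => [->|yn0].
  exists eone, ezero; rewrite emul1 emul0.
  have -> : eadd x ezero = x by case: x => [? ?]; eis_ring.
  by split; [apply: edvd_refl | exists ezero; rewrite emul0].
have [q [r [Ex Nr]]] := euclid_div x yn0.
have [a [b [gy gr]]] := IH r Nr y.
exists b, (eadd a (eopp (emul b q))).
have -> : eadd (emul b x) (emul (eadd a (eopp (emul b q))) y)
        = eadd (emul a y) (emul b r).
  by rewrite Ex; case: a b q r y {Ex Nr IH gy gr yn0} => [? ?] [? ?] [? ?] [? ?] [? ?]; eis_ring.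
by split=> //; rewrite Ex; apply: edvd_add => //; apply: edvd_mull.
Qed.

Definition eprime p := [/\ p <> ezero, ~ eunit p &
  forall x y, edvd p (emul x y) -> edvd p x \/ edvd p y].

Lemma irred_eprime z : z <> ezero -> ~ eunit z ->
  (forall d, edvd d z -> eunit d \/ edvd z d) -> eprime z.
Proof.
move=> zn0 zu irr; split=> // x y zxy.
have [a [b [gz gx]]] := bezout z x.
set g := eadd _ _ in gz gx.
have [[v gv]|zg] := irr g gz; last by left; apply: edvd_trans zg gx.
have zgy : edvd z (emul g y).
  rewrite /g emulC emulDr; apply: edvd_add; first by rewrite emulA; apply: edvd_mulIr.
  by rewrite emulA (emulC y b) -emulA (emulC y x); apply: edvd_mull.
by right; move: (edvd_mull v zgy); rewrite emulA (emulC v) gv emul1.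
Qed.

Lemma exists_eprime_dvd z : z <> ezero -> ~ eunit z ->
  exists2 p, eprime p & edvd p z.
Proof.
elim/enorm_ind: z => z IH zn0 zu.
have [irr|] := classic (forall d, edvd d z -> eunit d \/ edvd z d).
  by exists z; [apply: irred_eprime | apply: edvd_refl].
move=> /not_all_ex_not[d dNirr].
have [dz /not_or_and[du zNd]] := imply_to_and _ _ dNirr.
have dn0 : d <> ezero by move=> d0; move: dz => [c]; rewrite d0 emulC emul0.
have [p pp pd] := IH d (enorm_proper_dvd zn0 dz zNd) dn0 du.
by exists p => //; apply: edvd_trans pd dz.
Qed.

Definition epow p k := iter k (emul p) eone.

Lemma epowS p k : epow p k.+1 = emul p (epow p k).
Proof. by []. Qed.

Lemma epow_neq0 p k : p <> ezero -> epow p k <> ezero.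
Proof.
move=> pn0; elim: k => [|k IH]; first by case.
by rewrite epowS => /emul_eq0[].
Qed.

Lemma enorm_epow p k : enorm (epow p k) = enorm p ^+ k.
Proof. by elim: k => [|k IH]; rewrite ?enorm1 // epowS enormM IH exprS. Qed.

Lemma Gauss_edvd_epow p k x y : eprime p -> ~ edvd p y ->
  edvd (epow p k) (emul x y) -> edvd (epow p k) x.
Proof.
move=> [pn0 _ pP] pNy; elim: k x => [|k IH] x pkxy.
  by apply: eunit_dvd; exists eone; rewrite emul1.
have /pP[[x' Ex]|//] : edvd p (emul x y).
  by apply: edvd_trans pkxy; rewrite epowS; apply: edvd_mulIl.
move: pkxy => [t]; rewrite {}Ex epowS -!emulA => /emulI-/(_ pn0) E.
have [t' ->] : edvd (epow p k) x' by apply: IH; exists t; rewrite E.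
by exists t'; rewrite emulA.
Qed.

Lemma eprime_dvd_epow r p k : eprime r -> eprime p -> edvd r (epow p k) -> edvd p r.
Proof.
move=> [_ ru rP] [pn0 pu pP]; elim: k => [rd|k IH].
  by case: ru; apply: edvd_unit rd _; exists eone; rewrite emul1.
rewrite epowS => /rP[[c Ec]|//].
have /pP[//|[t Et]] : edvd p (emul r c) by rewrite -Ec; apply: edvd_refl.
case: ru; exists t; apply: (emulI pn0).
by rewrite emulA (emulC p) -emulA -Et -Ec emulC emul1.
Qed.

Lemma factor_epow p z : eprime p -> z <> ezero ->
  exists e w, z = emul (epow p e) w /\ ~ edvd p w.
Proof.
move=> pp; elim/enorm_ind: z => z IH zn0.
have [[z' Ez]|pNz] := classic (edvd p z); last by exists 0%N, z; rewrite emul1.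
have z'n0 : z' <> ezero by move=> E; apply: zn0; rewrite Ez E emul0.
have [pn0 pu _] := pp.
have lt_z'z : enorm z' < enorm z by rewrite Ez emulC enorm_lt_mul.
have [e [w [Ez' pNw]]] := IH z' lt_z'z z'n0.
by exists e.+1, w; rewrite Ez Ez' epowS emulA.
Qed.

Lemma erelprime_primes x y : x <> ezero ->
  (forall r, eprime r -> edvd r x -> ~ edvd r y) -> erelprime x y.
Proof.
move=> xn0 noprime d dx dy; apply: NNPP => du.
have dn0 : d <> ezero by move=> E; move: dx => [t]; rewrite E emulC emul0.
have [r rp rd] := exists_eprime_dvd dn0 du.
exact: noprime r rp (edvd_trans rd dx) (edvd_trans rd dy).
Qed.

Definition eassoc x y := exists2 u, eunit u & y = emul u x.

Lemma eassoc_sym x y : eassoc x y -> eassoc y x.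
Proof.
move=> [u [v uv] ->]; exists v; first by exists u; rewrite emulC.
by rewrite emulA (emulC v) uv emul1.
Qed.

Lemma eassoc_trans y x z : eassoc x y -> eassoc y z -> eassoc x z.
Proof.
move=> [u uu ->] [v vu ->]; exists (emul v u); last by rewrite emulA.
exact: eunit_mul.
Qed.

Lemma eassoc_dvd x y : eassoc x y -> edvd x y.
Proof. by move=> [u _ ->]; apply: edvd_mulIr. Qed.

Lemma eassoc_mull c x y : eassoc x y -> eassoc (emul c x) (emul c y).
Proof. by move=> [u uu ->]; exists u; rewrite // !emulA (emulC c). Qed.

Lemma eassoc_mul2l c x y : c <> ezero ->
  eassoc (emul c x) (emul c y) -> eassoc x y.
Proof.
move=> cn0 [u uu E]; exists u => //; apply: (emulI cn0).
by rewrite E !emulA (emulC c).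
Qed.

Lemma enorm_eassoc x y : eassoc x y -> enorm y = enorm x.
Proof. by move=> [u /eunit_norm uu ->]; rewrite enormM uu mul1r. Qed.

Definition eunits : seq eis := [:: (1, 0); (0, 1); (-1, 1); (-1, 0); (0, -1); (1, -1)].

Lemma eunitsP u : eunit u <-> u \in eunits.
Proof.
split=> [/eunit_norm|uu]; last first.
  have /allP/(_ u uu)/eqP : all (fun v => enorm v == 1) eunits by [].
  by rewrite -eunit_norm.
case: u => a b; rewrite /enorm /= => N1.
have ha : a \in [:: -1; 0; 1] by rewrite !inE; nia.
have hb : b \in [:: -1; 0; 1] by rewrite !inE; nia.
move: ha hb N1; rewrite !inE => /or3P[] /eqP-> /or3P[] /eqP->.
all: by rewrite /= !expr2 // => N1; exfalso; lia.
Qed.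

Lemma inA_neq0 x : inA x -> x <> ezero.
Proof. by case: x => p q [p_gt0 _] [p0 _]; move: p_gt0; rewrite p0. Qed.

Lemma inA_eassoc x y : inA x -> inA y -> eassoc x y -> y = x.
Proof.
move=> Ax Ay [u /eunitsP uE Ey]; move: Ay; rewrite {}Ey.
case: x Ax => p q [/= p_gt0 q_ge0].
move: uE; do ![case/predU1P=> [->|]] => //;
  by rewrite /inA /emul /= => -[]; intros; congr pair; lia.
Qed.

Definition inAb (x : eis) : bool := (0 < x.1) && (0 <= x.2).

Lemma inAP x : reflect (inA x) (inAb x).
Proof. exact: andP. Qed.

(* The associate of [x] in [A] (junk value [ezero] for [x = ezero]). *)
Definition reprA (x : eis) : eis :=
  head ezero [seq y <- [seq emul u x | u <- eunits] | inAb y].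

Lemma reprA_spec x : x <> ezero -> inA (reprA x) /\ eassoc x (reprA x).
Proof.
move=> xn0; have : has inAb [seq emul u x | u <- eunits].
  case: x xn0 => p q xn0; rewrite /= /inAb /emul /=.
  have : ~ (p = 0 /\ q = 0) by move=> [p0 q0]; apply: xn0; rewrite p0 q0.
  lia.
rewrite has_filter /reprA; case E: [seq y <- _ | _] => [//|y l] _ /=.
have : y \in [seq y <- [seq emul u x | u <- eunits] | inAb y] by rewrite E mem_head.
rewrite mem_filter => /andP[/inAP Ay /mapP[u uE Ey]].
by split=> //; exists u => //; apply/eunitsP.
Qed.

Lemma reprA_eq x y : inA y -> eassoc x y -> reprA x = y.
Proof.
move=> Ay xy; have xn0 : x <> ezero.
  by move: xy => [u _ Ey] x0; case: (inA_neq0 Ay); rewrite Ey x0 emul0.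
have [Ar xr] := reprA_spec xn0.
by apply: inA_eassoc => //; apply: eassoc_trans (eassoc_sym xy) xr.
Qed.

Lemma diamond_reprA x y : x <> ezero -> erelprime x y ->
  diamond (reprA x) (emul x y).
Proof.
move=> xn0 rp; have [Ar /eassoc_sym xr] := reprA_spec xn0.
have [v vu Ex] := xr; split=> //; exists (emul v y); split.
  by rewrite {1}Ex !emulA (emulC v).
move=> d dr dvy; apply: rp; first exact: edvd_trans dr (eassoc_dvd xr).
by apply: edvd_trans dvy _; apply: eassoc_dvd; apply: eassoc_sym; exists v.
Qed.

Definition enumerates (s : seq eis) (P : eis -> Prop) :=
  uniq s /\ forall x, x \in s <-> P x.

Lemma enumerates_perm s t P : enumerates s P -> enumerates t P -> perm_eq s t.
Proof.
move=> [us Hs] [ut Ht]; apply: uniq_perm => // x.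
by apply/idP/idP => [/Hs/Ht|/Ht/Hs].
Qed.

Lemma inA1 : inA eone.
Proof. by split. Qed.

Lemma diamond_eunit z x : eunit z -> diamond x z <-> x = eone.
Proof.
move=> zu; split=> [[Ax [y [Ey _]]]|->].
  apply: inA_eassoc inA1 Ax _; exists x; last by rewrite emulC emul1.
  by apply: edvd_unit zu; exists y.
split; first exact: inA1.
exists z; split; first by rewrite emul1.
by move=> d /edvd_unit du _; apply: du; apply/eunit_norm; rewrite enorm1.
Qed.

Lemma sum_diamond_eunit z s : eunit z -> enumerates s (diamond^~ z) ->
  \sum_(x <- s) enorm x = 1.
Proof.
move=> zu Es; have Eone : enumerates [:: eone] (diamond^~ z).
  by split=> // x; rewrite inE (diamond_eunit _ zu); split=> /eqP.
by rewrite (perm_big _ (enumerates_perm Es Eone)) big_seq1 enorm1.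
Qed.

Section PrimePowerFactor.

Variables (p w : eis) (e : nat).
Hypotheses (p_prime : eprime p) (e_gt0 : (0 < e)%N) (p_ndvd_w : ~ edvd p w).

Local Notation q := (epow p e).
Local Notation z := (emul (epow p e) w).

Let q_neq0 : q <> ezero.
Proof. by case: p_prime => pn0 _ _; apply: epow_neq0. Qed.

Let q_mul_neq0 y : inA y -> emul q y <> ezero.
Proof. by move=> Ay /emul_eq0[//|]; apply: inA_neq0. Qed.

Let p_dvd_q : edvd p q.
Proof. by rewrite -(prednK e_gt0) epowS; apply: edvd_mulIl. Qed.

Lemma diamond_coprime x : ~ edvd p x -> diamond x z <-> diamond x w.
Proof.
move=> pNx; split=> -[Ax [y [Ey rp]]]; split=> //.
  have /(Gauss_edvd_epow p_prime pNx)[y' Ey'] : edvd q (emul y x).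
    by rewrite emulC -Ey; apply: edvd_mulIl.
  exists y'; split; first by apply: (emulI q_neq0); rewrite Ey Ey' !emulA (emulC x).
  by move=> d dx dy'; apply: rp dx _; rewrite Ey'; apply: edvd_mull.
exists (emul q y); split; first by rewrite Ey !emulA (emulC x).
apply: (erelprime_primes (inA_neq0 Ax)) => r r_prime rx.
have [_ ru rP] := r_prime.
move=> /rP[/(eprime_dvd_epow r_prime p_prime) pr|ry]; first exact: pNx (edvd_trans pr rx).
exact: ru (rp r rx ry).
Qed.

Lemma diamond_dvd x : edvd p x -> diamond x z ->
  exists2 y, x = emul q y & diamond (reprA y) w.
Proof.
move=> px [Ax [y [Ey rp]]].
have pNy : ~ edvd p y by move=> py; case: p_prime => _ pu _; exact: pu (rp p px py).
have /(Gauss_edvd_epow p_prime pNy)[x' Ex'] : edvd q (emul x y).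
  by rewrite -Ey; apply: edvd_mulIl.
exists x' => //.
have x'n0 : x' <> ezero by move=> x'0; apply: (inA_neq0 Ax); rewrite Ex' x'0 emul0.
have -> : w = emul x' y by apply: (emulI q_neq0); rewrite Ey Ex' emulA.
apply: diamond_reprA => // d dx' dy; apply: rp dy.
by rewrite Ex'; apply: edvd_mull.
Qed.

Lemma diamond_epow_mul y : diamond y w ->
  diamond (reprA (emul q y)) z /\ edvd p (reprA (emul q y)).
Proof.
move=> [Ay [t [Ey rp]]].
have [_ qy_r] := reprA_spec (q_mul_neq0 Ay).
split; last exact: edvd_trans (edvd_mulr y p_dvd_q) (eassoc_dvd qy_r).
rewrite Ey emulA; apply: diamond_reprA; first exact: q_mul_neq0.
apply: (erelprime_primes (q_mul_neq0 Ay)) => r r_prime rqy rt.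
have [_ ru rP] := r_prime.
have [rq|ry] := rP _ _ rqy; last exact: ru (rp r ry rt).
apply: p_ndvd_w; rewrite Ey; apply: edvd_mull.
exact: edvd_trans (eprime_dvd_epow r_prime p_prime rq) rt.
Qed.

Lemma enumerates_diamond_coprime s : enumerates s (diamond^~ z) ->
  enumerates [seq x <- s | ~~ edvdb p x] (diamond^~ w).
Proof.
move=> [us Hs]; split=> [|x]; first exact: filter_uniq.
rewrite mem_filter; split=> [/andP[/edvdP pNx /Hs]|dx]; first by rewrite diamond_coprime.
have pNx : ~ edvd p x.
  by move=> px; case: dx => _ [y [Ey _]]; apply: p_ndvd_w; rewrite Ey; apply: edvd_mulr.
by apply/andP; split; [apply/edvdP | apply/Hs; rewrite diamond_coprime].
Qed.

Lemma enumerates_diamond_dvd t : enumerates t (diamond^~ w) ->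
  enumerates [seq reprA (emul q y) | y <- t] (fun x => diamond x z /\ edvd p x).
Proof.
move=> [ut Ht]; split=> [|x].
  rewrite map_inj_in_uniq // => y1 y2 /Ht[Ay1 _] /Ht[Ay2 _] E.
  have [_ r1] := reprA_spec (q_mul_neq0 Ay1); have [_ r2] := reprA_spec (q_mul_neq0 Ay2).
  apply: inA_eassoc Ay2 Ay1 _; apply: (eassoc_mul2l q_neq0).
  by apply: eassoc_trans r2 _; rewrite -E; apply: eassoc_sym r1.
split=> [/mapP[y /Ht dy ->]|[dx px]]; first exact: diamond_epow_mul.
have [y Ex dy] := diamond_dvd px dx; apply/mapP; exists (reprA y); first exact/Ht.
have [Ax _] := dx.
have yn0 : y <> ezero by move=> y0; apply: (inA_neq0 Ax); rewrite Ex y0 emul0.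
have [_ yr] := reprA_spec yn0.
by rewrite (reprA_eq Ax) // Ex; apply: eassoc_mull; apply: eassoc_sym yr.
Qed.

Lemma sum_diamond_epow s t :
  enumerates s (diamond^~ z) -> enumerates t (diamond^~ w) ->
  \sum_(x <- s) enorm x = (1 + enorm p ^+ e) * \sum_(y <- t) enorm y.
Proof.
move=> [us Hs] Et.
rewrite (bigID (edvdb p)) /= addrC mulrDl mul1r -enorm_epow.
congr (_ + _); rewrite -big_filter.
  apply: perm_big; apply: enumerates_perm Et.
  exact: enumerates_diamond_coprime.
have Es_dvd : enumerates [seq x <- s | edvdb p x] (fun x => diamond x z /\ edvd p x).
  split=> [|x]; first exact: filter_uniq.
  rewrite mem_filter.
  by split=> [/andP[/edvdP px /Hs dx] | [/Hs dx /edvdP px]]; [split | rewrite px dx].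
rewrite (perm_big _ (enumerates_perm Es_dvd (enumerates_diamond_dvd Et))) big_map.
rewrite mulr_sumr; apply: eq_big_seq => y /Et.2[Ay _].
have [_ qy_r] := reprA_spec (q_mul_neq0 Ay).
by rewrite (enorm_eassoc qy_r) enormM.
Qed.

End PrimePowerFactor.

Lemma enorm_mod3 x : (enorm x %% 3 <= 1)%Z.
Proof.
have -> : enorm x = (x.1 * x.2) * 3 + (x.1 - x.2) ^+ 2 by rewrite /enorm; ring.
rewrite modzMDl -modzXm.
have : (0 <= (x.1 - x.2) %% 3 < 3)%Z by lia.
by set r := ((x.1 - x.2) %% 3)%Z => r_bd; have [->|[->|->]] : r = 0 \/ r = 1 \/ r = 2 by lia.
Qed.

Lemma modz3_le1_exp (n : int) k : (n %% 3 <= 1)%Z -> (n ^+ k %% 3 <= 1)%Z.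
Proof.
move=> le1; rewrite -modzXm.
have [->|->] : (n %% 3 = 0 \/ n %% 3 = 1)%Z by lia.
  by rewrite expr0n; case: k.
by rewrite expr1n.
Qed.

Lemma ndvd3_1_add_enorm_exp x k : ~~ (3 %| 1 + enorm x ^+ k)%Z.
Proof. by have := modz3_le1_exp k (enorm_mod3 x); lia. Qed.

Lemma Euclid_dvdzM (p : nat) (m n : int) : prime p ->
  (p %| m * n)%Z = (p %| m)%Z || (p %| n)%Z.
Proof. by move=> pp; rewrite !dvdzE abszM; apply: Euclid_dvdM. Qed.

Lemma sum_diamond_ndvd3 z s : z <> ezero -> enumerates s (diamond^~ z) ->
  ~~ (3 %| \sum_(x <- s) enorm x)%Z.
Proof.
elim/enorm_ind: z s => z IH s zn0 Es.
have [zu|zu] := classic (eunit z); first by rewrite (sum_diamond_eunit zu Es).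
have [p pp pz] := exists_eprime_dvd zn0 zu.
have [e [w [Ez pNw]]] := factor_epow pp zn0.
have e_gt0 : (0 < e)%N by case: e Ez => // Ez; case: pNw; rewrite -[w]emul1 -Ez.
have wn0 : w <> ezero by move=> w0; apply: zn0; rewrite Ez w0 emul0.
have lt_wz : enorm w < enorm z.
  apply: enorm_proper_dvd zn0 _ _; first by rewrite Ez; apply: edvd_mulIr.
  by move=> zw; apply: pNw; apply: edvd_trans pz zw.
rewrite Ez in Es; have Et := enumerates_diamond_coprime pp pNw Es.
rewrite (sum_diamond_epow pp e_gt0 pNw Es Et) Euclid_dvdzM //.
by rewrite negb_or ndvd3_1_add_enorm_exp (IH w lt_wz _ wn0 Et).
Qed.

Theorem theorem2p4 (a b : nat) :
  (0 < a)%N -> (0 < b)%N -> coprime a b -> (3 %| a)%N ->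
  ~ (exists z : eis, z <> ezero /\ I2_is z (a%:R / b%:R)).
Proof.
move=> _ b_gt0 coab dvd3a [z [zn0 [d [[s [us [Hs ->]]] Er]]]].
have S3 := sum_diamond_ndvd3 zn0 (conj us Hs); set S := \sum_(x <- s) enorm x in S3.
have E : a%:Z * enorm z = S * b%:Z.
  apply: (@intr_inj rat); move/eqP: Er; rewrite -rmorph_sum /= -/S !intrM.
  rewrite eqr_div ?intr_eq0 ?pnatr_eq0 -?lt0n // => [/eqP //|].
  by apply/eqP => /enorm_eq0.
have co3b : coprimez 3 b by rewrite coprimezE; apply: coprime_dvdl dvd3a coab.
case/negP: S3; rewrite -(Gauss_dvdzl _ co3b) -E.
by apply: dvdz_mulr; rewrite dvdzE.
Qed.
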